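(* Let $p\in\{1,2,\dots\}\cup\{\infty\}$ and let $\mathbf{\Delta}:\ell^n\to\ell^n$ be strictly causal. Assume that for some $\rho>0$ and $0\le\gamma<1$, $\|\mathbf{\Delta}(\mathbf{x})\|_p\le\gamma\|\mathbf{x}\|_p$ for all $\mathbf{x}\in\ell^n$ with $\|\mathbf{x}\|_p<\rho$. Then $(\mathbf{I}-\mathbf{\Delta})^{-1}$ is continuous at $\mathbf{w}=0$ as a map $\ell^n_p\to\ell^n_p$: for every $\varepsilon>0$ there exists $\delta>0$ such that $\|\mathbf{w}\|_p<\delta$ implies $\|(\mathbf{I}-\mathbf{\Delta})^{-1}(\mathbf{w})\|_p<\varepsilon$ (in fact one can take $\delta=(1-\gamma)\min\{\rho,\varepsilon\}$).
   Context: $\ell^n$ is the space of sequences in $\mathbb{R}^n$; $|\cdot|$ a fixed norm on $\mathbb{R}^n$; $\|\cdot\|_p$ the usual $\ell_p$ norm of sequences built from $|\cdot|$ (sup for $p=\infty$), $\ell^n_p=\{\mathbf{x}:\|\mathbf{x}\|_p<\infty\}$. $\mathbf{\Delta}$ strictly causal means $(\mathbf{\Delta}(\mathbf{x}))_t=\Delta_t(x_{t-1},\dots,x_0)$; then $(\mathbf{I}-\mathbf{\Delta})^{-1}(\mathbf{w})$ is the unique $\mathbf{y}$ with $\mathbf{y}=\mathbf{\Delta}(\mathbf{y})+\mathbf{w}$. *)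

From HB Require Import structures.
From mathcomp Require Import all_boot all_order all_algebra.
From mathcomp Require Import all_classical all_reals all_analysis.
Set Implicit Arguments. Unset Strict Implicit. Unset Printing Implicit Defensive.
Import Order.TTheory GRing.Theory Num.Theory.
Local Open Scope ring_scope.
Local Open Scope classical_set_scope.

(* Exponents p in {1,2,...} U {oo}: PFin k stands for p = k (k >= 1 is
   required separately by [valid_exponent]), PInf for p = oo. *)
Inductive exponent := PFin of nat | PInf.

Definition valid_exponent (p : exponent) : Prop :=
  match p with PFin k => (0 < k)%N | PInf => True end.

Definition is_norm (R : realType) (n : nat) (N : 'rV[R]_n -> R) : Prop :=
  [/\ forall x, 0 <= N x,
      forall x, N x = 0 -> x = 0,
      forall (a : R) x, N (a *: x) = `|a| * N x &
      forall x y, N (x + y) <= N x + N y].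

Definition ellseq (R : realType) (n : nat) := nat -> 'rV[R]_n.
Arguments ellseq : clear implicits.

(* The ell_p norm of a sequence built from N, valued in the extended reals
   (it is +oo exactly when the sequence is not in ell^n_p). *)
Definition lp_norm (R : realType) (n : nat) (N : 'rV[R]_n -> R)
    (p : exponent) (x : ellseq R n) : \bar R :=
  match p with
  | PFin k =>
      match (\sum_(0 <= t <oo) ((N (x t)) ^+ k)%:E)%E with
      | EFin s => (s `^ (k%:R^-1))%:E
      | _ => +oo%E
      end
  | PInf => ereal_sup (range (fun t => (N (x t))%:E))
  end.

Definition strictly_causal (R : realType) (n : nat)
    (D : ellseq R n -> ellseq R n) : Prop :=
  forall (x y : ellseq R n) (t : nat),
    (forall s, (s < t)%N -> x s = y s) -> D x t = D y t.

From HB Require Import structures.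
From mathcomp Require Import all_boot all_order all_algebra.
From mathcomp Require Import all_classical all_reals all_analysis.
Import Order.TTheory GRing.Theory Num.Theory.
Local Open Scope ring_scope.

(* For the loop y = Delta y + w with ||w|| <= (1 - gamma) b and b < rho, an
   induction on T using strict causality shows that every truncation
   y|_[0,T) has norm at most b: the truncation at T stays in the ball of
   radius rho where the gain bound applies, so
   ||y|_[0,T+1)|| <= ||Delta (y|_[0,T))|| + ||w|| <= gamma b + (1 - gamma) b.
   Passing to the supremum over T bounds ||y|| by b, and the theorem follows
   with delta = (1 - gamma) min(rho, eps). *)

Definition truncate {V : zmodType} (T : nat) (x : nat -> V) : nat -> V :=
  fun t => if (t < T)%N then x t else 0.

Lemma is_norm0 (R : realType) (n : nat) (N : 'rV[R]_n -> R) :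
  is_norm N -> N 0 = 0.
Proof.
by case=> _ _ Nscale _; rewrite -(scale0r (0 : 'rV[R]_n)) Nscale normr0 mul0r.
Qed.

Lemma norm_truncate (R : realType) (n : nat) (N : 'rV[R]_n -> R)
    (T : nat) (x : ellseq R n) :
  is_norm N -> (fun t => N (truncate T x t)) = truncate T (fun t => N (x t)).
Proof.
by move=> hN; apply: funext => t; rewrite /truncate; case: ifP; rewrite ?is_norm0.
Qed.

Section SequenceNorm.
Context {R : realType}.

Definition seq_lp (p : exponent) (a : nat -> R) : \bar R :=
  match p with
  | PFin k =>
      match (\sum_(0 <= t <oo) ((a t) ^+ k)%:E)%E with
      | EFin s => (s `^ (k%:R^-1))%:E
      | _ => +oo%E
      end
  | PInf => ereal_sup (range (fun t => (a t)%:E))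
  end.

Lemma lp_norm_seq (n : nat) (N : 'rV[R]_n -> R) (p : exponent)
    (x : ellseq R n) :
  lp_norm N p x = seq_lp p (fun t => N (x t)).
Proof. by case: p. Qed.

Local Open Scope ereal_scope.

Lemma seq_lpE (k : nat) (a : nat -> R) : (forall t, 0 <= a t)%R -> (0 < k)%N ->
  seq_lp (PFin k) a = (\sum_(0 <= t <oo) ((a t) ^+ k)%:E) `^ (k%:R^-1).
Proof.
move=> a_ge0 k_gt0 /=.
have : 0 <= \sum_(0 <= t <oo) ((a t) ^+ k)%:E.
  by apply: nneseries_ge0 => t _ _; rewrite lee_fin exprn_ge0.
case: (\sum_(0 <= t <oo) _) => [s | | //] _; first by rewrite poweR_EFin.
by rewrite poweRyr // invr_eq0 pnatr_eq0 -lt0n.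
Qed.

Lemma seq_lp_Lnorm (k : nat) (a : nat -> R) :
  (forall t, 0 <= a t)%R -> (0 < k)%N ->
  seq_lp (PFin k) a = Lnorm (@counting nat R) (k%:R)%:E (EFin \o a).
Proof.
move=> a_ge0 k_gt0; rewrite seq_lpE // Lnorm_counting ?ltr0n //.
congr (_ `^ _); apply: eq_eseriesr => t _ /=.
by rewrite ger0_norm // powR_mulrn.
Qed.

Lemma seq_lp_ge0 (p : exponent) (a : nat -> R) :
  (forall t, 0 <= a t)%R -> valid_exponent p -> 0 <= seq_lp p a.
Proof.
move=> a_ge0; case: p => [k k_gt0 | _]; first by rewrite seq_lpE ?poweR_ge0.
apply: le_ereal_sup_tmp; exists (a 0%N)%:E; first by exists 0%N.
by rewrite lee_fin.
Qed.

Lemma seq_lp_le (p : exponent) (a b : nat -> R) : (forall t, 0 <= a t)%R ->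
  (forall t, a t <= b t)%R -> valid_exponent p -> seq_lp p a <= seq_lp p b.
Proof.
move=> a_ge0 le_ab.
have b_ge0 t : (0 <= b t)%R by exact: le_trans (le_ab t).
case: p => [k k_gt0 | _].
- have sum_ge0 c : (forall t, 0 <= c t)%R ->
      0 <= \sum_(0 <= t <oo) ((c t) ^+ k)%:E :> \bar R.
    by move=> c_ge0; apply: nneseries_ge0 => t _ _; rewrite lee_fin exprn_ge0.
  rewrite !seq_lpE //; apply: gt0_ler_poweR.
  + by rewrite invr_ge0 ler0n.
  + by rewrite in_itv /= leey sum_ge0.
  + by rewrite in_itv /= leey sum_ge0.
  apply: lee_nneseries => [t _ _ | t _]; first by rewrite lee_fin exprn_ge0.
  by rewrite lee_fin lerXn2r // nnegrE.
- apply: ge_ereal_sup => _ [t _ <-].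
  apply: le_ereal_sup_tmp; exists (b t)%:E; first by exists t.
  by rewrite lee_fin.
Qed.

Lemma seq_lp_add (p : exponent) (a b : nat -> R) : (forall t, 0 <= a t)%R ->
  (forall t, 0 <= b t)%R -> valid_exponent p ->
  seq_lp p (fun t => a t + b t)%R <= seq_lp p a + seq_lp p b.
Proof.
move=> a_ge0 b_ge0; case: p => [k k_gt0 | _].
- have ab_ge0 t : (0 <= a t + b t)%R by rewrite addr_ge0.
  rewrite !seq_lp_Lnorm //.
  by apply: minkowski_EFin; rewrite // ler1n.
- apply: ge_ereal_sup => _ [t _ <-]; rewrite EFinD.
  by apply: leeD; apply: ereal_sup_ubound; exists t.
Qed.

Lemma root_le (k : nat) (x y : \bar R) : (0 < k)%N -> 0 <= x -> 0 <= y ->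
  (x `^ k%:R^-1 <= y) = (x <= y `^ k%:R).
Proof.
move=> k_gt0 x_ge0 y_ge0.
have kV_ge0 : (0 <= k%:R^-1 :> R)%R by rewrite invr_ge0 ler0n.
have k0 : (k%:R != 0 :> R)%R by rewrite pnatr_eq0 -lt0n.
have in0y (z : \bar R) : 0 <= z -> z \in `[0%R, +oo] by move=> z_ge0; rewrite in_itv /= leey andbT.
have rootK (z : \bar R) : 0 <= z -> (z `^ k%:R^-1) `^ k%:R = z.
  by move=> z_ge0; rewrite -poweRrM mulVf // poweRe1.
have powK (z : \bar R) : 0 <= z -> (z `^ k%:R) `^ k%:R^-1 = z.
  by move=> z_ge0; rewrite -poweRrM mulfV // poweRe1.
apply/idP/idP => le_xy.
- rewrite -{1}(rootK x) //.
  by apply: gt0_ler_poweR; rewrite ?ler0n ?in0y ?poweR_ge0.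
- rewrite -(powK y) //.
  by apply: gt0_ler_poweR; rewrite ?in0y ?poweR_ge0.
Qed.

Lemma seq_lp_truncate_le (p : exponent) (a : nat -> R) (c : R) :
  (forall t, 0 <= a t)%R -> (0 <= c)%R -> valid_exponent p ->
  (forall T, seq_lp p (truncate T a) <= c%:E) -> seq_lp p a <= c%:E.
Proof.
move=> a_ge0 c_ge0; case: p => [k k_gt0 | _] trunc_le; last first.
  apply: ge_ereal_sup => _ [t _ <-]; apply: le_trans (trunc_le t.+1).
  by apply: ereal_sup_ubound; exists t; rewrite //= /truncate ltnSn.
have trunc_ge0 T t : (0 <= truncate T a t)%R by rewrite /truncate; case: ifP.
have pow_ge0 b : (forall t, 0 <= b t)%R -> forall t, 0 <= ((b t) ^+ k)%:E :> \bar R.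
  by move=> b_ge0 t; rewrite lee_fin exprn_ge0.
rewrite seq_lpE // root_le ?lee_fin //; last first.
  by apply: nneseries_ge0 => t _ _; exact: pow_ge0.
apply: lime_le; first by apply: is_cvg_nneseries => t _ _; exact: pow_ge0.
apply: nearW => T.
have partial_le : \sum_(0 <= t < T) ((a t) ^+ k)%:E <=
    \sum_(0 <= t <oo) ((truncate T a t) ^+ k)%:E.
  rewrite (@eq_big_nat _ _ _ 0 T _ (fun t => ((truncate T a t) ^+ k)%:E)).
    by apply: nneseries_lim_ge => t _ _; exact: pow_ge0.
  by move=> t /andP[_ tT]; rewrite /truncate tT.
apply: le_trans partial_le _; rewrite -root_le ?lee_fin //.
- by rewrite -seq_lpE.
- by apply: nneseries_ge0 => t _ _; exact: pow_ge0.
Qed.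

End SequenceNorm.

Section SmallGain.
Context {R : realType} {n : nat} {N : 'rV[R]_n -> R} {p : exponent}.
Context {D : ellseq R n -> ellseq R n} {rho gamma : R}.
Hypotheses (normN : is_norm N) (p_valid : valid_exponent p).
Hypotheses (causalD : strictly_causal D).
Hypotheses (gamma_ge0 : 0 <= gamma) (gamma_lt1 : gamma < 1).
Hypothesis gainD : forall x : ellseq R n, (lp_norm N p x < rho%:E)%E ->
  (lp_norm N p (D x) <= gamma%:E * lp_norm N p x)%E.

Let N_ge0 (v : 'rV[R]_n) : 0 <= N v. Proof. by case: normN. Qed.

Let gap_gt0 : 0 < 1 - gamma. Proof. by rewrite subr_gt0. Qed.

Local Open Scope ereal_scope.

Lemma truncated_solution_le {w y : ellseq R n} {b : R} :
  (b < rho)%R ->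
  lp_norm N p w <= ((1 - gamma) * b)%:E ->
  (forall t, y t = (D y t + w t)%R) ->
  forall T, lp_norm N p (truncate T y) <= b%:E.
Proof.
move=> b_lt_rho w_le y_sol.
have w_ge0 : 0 <= lp_norm N p w by rewrite lp_norm_seq seq_lp_ge0.
have b_ge0 : (0 <= b)%R by rewrite -(pmulr_rge0 _ gap_gt0) -lee_fin (le_trans w_ge0).
elim=> [|T IH].
  rewrite lp_norm_seq norm_truncate //; apply: le_trans (le_trans w_le _).
  - by rewrite lp_norm_seq; apply: seq_lp_le => // t; rewrite /truncate.
  - by rewrite lee_fin ler_piMl // lerBlDr lerDl.
have trunc_small : lp_norm N p (truncate T y) < rho%:E.
  by apply: le_lt_trans IH _; rewrite lte_fin.
(* By causality, y agrees with Delta (y|_[0,T)) + w before time T+1. *)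
have pointwise t : (N (truncate T.+1 y t) <= N (D (truncate T y) t) + N (w t))%R.
  rewrite /truncate; case: ifP => [tT | _]; last by rewrite is_norm0 ?addr_ge0.
  rewrite y_sol (causalD y (truncate T y) t); first by case: normN.
  by move=> s st; rewrite /truncate (leq_trans st).
rewrite lp_norm_seq.
apply: le_trans (seq_lp_le p _ _ (fun t => N_ge0 _) pointwise p_valid) _.
apply: le_trans (seq_lp_add p _ _ (fun t => N_ge0 _) (fun t => N_ge0 _) p_valid) _.
rewrite -(lp_norm_seq _ N p (D _)) -(lp_norm_seq _ N p w).
apply: le_trans (leeD (gainD _ trunc_small) w_le) _.
apply: le_trans (leeD (lee_wpmul2l _ IH) (lexx _)) _; first by rewrite lee_fin.
by rewrite -EFinM -EFinD mulrBl mul1r addrC subrK.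
Qed.

Lemma solution_lt {w y : ellseq R n} {m : R} :
  (m <= rho)%R ->
  lp_norm N p w < ((1 - gamma) * m)%:E ->
  (forall t, y t = (D y t + w t)%R) -> lp_norm N p y < m%:E.
Proof.
move=> m_le_rho w_lt y_sol.
have w_ge0 : 0 <= lp_norm N p w by rewrite lp_norm_seq seq_lp_ge0.
have [W w_eq] : exists W : R, lp_norm N p w = W%:E.
  by exists (fine (lp_norm N p w)); rewrite fineK // ge0_fin_numE // (lt_trans w_lt) ?ltry.
rewrite w_eq lee_fin in w_ge0; rewrite w_eq lte_fin in w_lt.
pose b := (W / (1 - gamma))%R.
have W_eq : W = ((1 - gamma) * b)%R by rewrite /b mulrC divfK ?gt_eqF.
have b_lt_m : (b < m)%R by rewrite -(ltr_pM2l gap_gt0) -W_eq.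
have b_ge0 : (0 <= b)%R by rewrite divr_ge0 // ltW.
apply: (@le_lt_trans _ _ b%:E); last by rewrite lte_fin.
rewrite lp_norm_seq; apply: seq_lp_truncate_le => // T.
rewrite -norm_truncate // -lp_norm_seq.
apply: (truncated_solution_le (lt_le_trans b_lt_m m_le_rho) _ y_sol).
by rewrite w_eq -W_eq.
Qed.

End SmallGain.

Theorem mainTheorem7 (R : realType) (n : nat) (N : 'rV[R]_n -> R)
  (p : exponent) (D : ellseq R n -> ellseq R n) (rho gamma : R) :
  is_norm N -> valid_exponent p -> strictly_causal D ->
  0 < rho -> 0 <= gamma -> gamma < 1 ->
  (forall x : ellseq R n, (lp_norm N p x < rho%:E)%E ->
     (lp_norm N p (D x) <= gamma%:E * lp_norm N p x)%E) ->
  forall eps : R, 0 < eps ->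
  exists delta : R, 0 < delta /\
    forall w y : ellseq R n,
      (lp_norm N p w < delta%:E)%E ->
      (forall t, y t = D y t + w t) ->
      (lp_norm N p y < eps%:E)%E.
Proof.
move=> normN p_valid causalD rho_gt0 gamma_ge0 gamma_lt1 gainD eps eps_gt0.
exists ((1 - gamma) * Num.min rho eps); split.
  by rewrite mulr_gt0 ?subr_gt0 // lt_min rho_gt0 eps_gt0.
move=> w y w_small y_sol.
have min_le_rho : Num.min rho eps <= rho by rewrite ge_min lexx.
have min_le_eps : Num.min rho eps <= eps by rewrite ge_min lexx orbT.
have := solution_lt normN p_valid causalD gamma_ge0 gamma_lt1 gainD min_le_rho
  w_small y_sol.
by move/lt_le_trans; apply; rewrite lee_fin.
Qed.
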